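(* Let $\mathbf{L}\in\{\mathbf{K}_D,\mathbf{KD}_D,\mathbf{KT}_D\}$. The weakening rules are admissible in $\mathsf{G}(\mathbf{L})$: for all finite multisets $\Gamma,\Delta$ and every formula $\lambda$, if $\mathsf{G}(\mathbf{L})\vdash\Gamma\Rightarrow\Delta$ then $\mathsf{G}(\mathbf{L})\vdash\Gamma\Rightarrow\Delta,\lambda$ and $\mathsf{G}(\mathbf{L})\vdash\lambda,\Gamma\Rightarrow\Delta$.
   Context: Language: fix a finite nonempty set $\mathsf{Agt}$ of agents and a countable set $\mathsf{Prop}$ of propositional variables; $\mathsf{Grp}$ is the set of nonempty subsets of $\mathsf{Agt}$. Formulas: $\alpha::=p\mid\bot\mid\alpha\wedge\alpha\mid\alpha\vee\alpha\mid\alpha\rightarrow\alpha\mid\neg\alpha\mid D_G\alpha$ ($p\in\mathsf{Prop}$, $G\in\mathsf{Grp}$). Outmost-boxed formula: one of the form $D_G\gamma$. Sequent calculi (sequents $\Gamma\Rightarrow\Delta$ are pairs of finite multisets; derivable = root of a finite tree built from initial sequents by rules): $\mathsf{G}(\mathbf{K}_D)$ has initial sequents $\Gamma,p\Rightarrow p,\Delta$ and $\bot,\Gamma\Rightarrow\Delta$; rules $(R\wedge)$ from $\Gamma\Rightarrow\Delta,\alpha_1$ and $\Gamma\Rightarrow\Delta,\alpha_2$ infer $\Gamma\Rightarrow\Delta,\alpha_1\wedge\alpha_2$; $(L\wedge)$ from $\alpha_1,\alpha_2,\Gamma\Rightarrow\Delta$ infer $\alpha_1\wedge\alpha_2,\Gamma\Rightarrow\Delta$;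 $(R\vee)$ from $\Gamma\Rightarrow\Delta,\alpha_1,\alpha_2$ infer $\Gamma\Rightarrow\Delta,\alpha_1\vee\alpha_2$; $(L\vee)$ from $\alpha_1,\Gamma\Rightarrow\Delta$ and $\alpha_2,\Gamma\Rightarrow\Delta$ infer $\alpha_1\vee\alpha_2,\Gamma\Rightarrow\Delta$; $(R\rightarrow)$ from $\alpha_1,\Gamma\Rightarrow\Delta,\alpha_2$ infer $\Gamma\Rightarrow\Delta,\alpha_1\rightarrow\alpha_2$; $(L\rightarrow)$ from $\Gamma\Rightarrow\Delta,\alpha_1$ and $\alpha_2,\Gamma\Rightarrow\Delta$ infer $\alpha_1\rightarrow\alpha_2,\Gamma\Rightarrow\Delta$; $(R\neg)$ from $\alpha,\Gamma\Rightarrow\Delta$ infer $\Gamma\Rightarrow\Delta,\neg\alpha$; $(L\neg)$ from $\Gamma\Rightarrow\Delta,\alpha$ infer $\neg\alpha,\Gamma\Rightarrow\Delta$; $(D_K)$: from $\alpha_1,\dots,\alpha_n\Rightarrow\beta$ ($n\ge0$) infer $\Sigma,D_{G_1}\alpha_1,\dots,D_{G_n}\alpha_n\Rightarrow D_G\beta,\Omega$ where all $G_i\subseteq G$, $\Sigma$ consists only of propositional variables, $\bot$, and $D_H\gamma$ with $H\not\subseteq G$, and $\Omega$ only of propositional variables, $\bot$, outmost-boxed formulas. $\mathsf{G}(\mathbf{KD}_D)$ adds $(D_D)$: from $\Gamma\Rightarrow$ with $\Gamma\neq\emptyset$ infer $\Sigma,D_{\{a\}}\Gamma\Rightarrow\Omega$,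 $\Sigma$ only propositional variables, $\bot$, $D_H\gamma$ with $H\neq\{a\}$; $\Omega$ only propositional variables, $\bot$, outmost-boxed formulas. $\mathsf{G}(\mathbf{KT}_D)$ adds to $\mathsf{G}(\mathbf{K}_D)$ $(D_T)$: from $D_G\alpha,\alpha,\Gamma\Rightarrow\Delta$ infer $D_G\alpha,\Gamma\Rightarrow\Delta$. *)

From mathcomp Require Import all_boot.
From Stdlib Require Import List Permutation.
Set Implicit Arguments. Unset Strict Implicit. Unset Printing Implicit Defensive.

Section Syntax.
Variable Agt : finType.

Definition grp := {G : {set Agt} | G != set0}.

Inductive form : Type :=
| Var : nat -> form
| Bot : form
| And : form -> form -> form
| Or  : form -> form -> form
| Imp : form -> form -> form
| Neg : form -> form
| Box : grp -> form -> form.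

Definition is_atom_or_bot (a : form) : Prop :=
  match a with Var _ | Bot => True | _ => False end.

Definition omega_ok (a : form) : Prop :=
  match a with Var _ | Bot | Box _ _ => True | _ => False end.

Definition sigmaK_ok (G : grp) (a : form) : Prop :=
  match a with
  | Var _ | Bot => True
  | Box H _ => ~ (val H \subset val G)
  | _ => False
  end.

Definition sigmaD_ok (ag : Agt) (a : form) : Prop :=
  match a with
  | Var _ | Bot => True
  | Box H _ => val H <> [set ag]
  | _ => False
  end.

Inductive logic := LK | LKD | LKT.

(* Sequents are pairs of finite multisets, represented by lists up to permutation. *)
Inductive derivable (L : logic) : list form -> list form -> Prop :=
| ax_var : forall G D Gm Dl p,
    Permutation G (Var p :: Gm) -> Permutation D (Var p :: Dl) -> derivable L G D
| ax_bot : forall G D Gm,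
    Permutation G (Bot :: Gm) -> derivable L G D
| r_and : forall G D Dl a1 a2,
    derivable L G (Dl ++ [:: a1]) -> derivable L G (Dl ++ [:: a2]) ->
    Permutation D (Dl ++ [:: And a1 a2]) -> derivable L G D
| l_and : forall G D Gm a1 a2,
    derivable L (a1 :: a2 :: Gm) D ->
    Permutation G (And a1 a2 :: Gm) -> derivable L G D
| r_or : forall G D Dl a1 a2,
    derivable L G (Dl ++ [:: a1; a2]) ->
    Permutation D (Dl ++ [:: Or a1 a2]) -> derivable L G D
| l_or : forall G D Gm a1 a2,
    derivable L (a1 :: Gm) D -> derivable L (a2 :: Gm) D ->
    Permutation G (Or a1 a2 :: Gm) -> derivable L G D
| r_imp : forall G D Dl a1 a2,
    derivable L (a1 :: G) (Dl ++ [:: a2]) ->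
    Permutation D (Dl ++ [:: Imp a1 a2]) -> derivable L G D
| l_imp : forall G D Gm a1 a2,
    derivable L Gm (D ++ [:: a1]) -> derivable L (a2 :: Gm) D ->
    Permutation G (Imp a1 a2 :: Gm) -> derivable L G D
| r_neg : forall G D Dl a,
    derivable L (a :: G) Dl ->
    Permutation D (Dl ++ [:: Neg a]) -> derivable L G D
| l_neg : forall G D Gm a,
    derivable L Gm (D ++ [:: a]) ->
    Permutation G (Neg a :: Gm) -> derivable L G D
| r_DK : forall G D (Sg Om : list form) (boxes : list (grp * form)) (Gp : grp) b,
    derivable L (map snd boxes) [:: b] ->
    (forall x, In x boxes -> val x.1 \subset val Gp) ->
    (forall s, In s Sg -> sigmaK_ok Gp s) ->
    (forall o, In o Om -> omega_ok o) ->
    Permutation G (Sg ++ map (fun x => Box x.1 x.2) boxes) ->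
    Permutation D (Box Gp b :: Om) ->
    derivable L G D
| r_DD : forall G D (Sg Om Gam : list form) (ag : Agt) (Ga : grp),
    L = LKD ->
    val Ga = [set ag] ->
    Gam <> nil ->
    derivable L Gam nil ->
    (forall s, In s Sg -> sigmaD_ok ag s) ->
    (forall o, In o Om -> omega_ok o) ->
    Permutation G (Sg ++ map (Box Ga) Gam) ->
    Permutation D Om ->
    derivable L G D
| r_DT : forall G D Gm (Gp : grp) a,
    L = LKT ->
    derivable L (Box Gp a :: a :: Gm) D ->
    Permutation G (Box Gp a :: Gm) ->
    derivable L G D.

End Syntax.

(** Weakening is proved in the stronger form "from Γ ⇒ Δ derive X, Γ ⇒ Δ, Y
    for arbitrary multisets X and Y", by induction on the derivation.  The
    propositional rules and (D_T) carry the extra context along unchanged.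
    The modal rules (D_K) and (D_D) only tolerate variables, ⊥ and boxed
    formulas in their side contexts, so compound formulas of X and Y are first
    decomposed by applying the propositional rules backwards, by induction on
    the total size of X and Y.  What remains is absorbed by the modal rule:
    on the right into Ω, on the left into Σ, or, for a box D_H γ with H ⊆ G
    (resp. H = {a}), as one more principal box, whose body γ is added to the
    premise by the induction hypothesis. *)

From mathcomp Require Import all_boot zify.
From Stdlib Require Import List Permutation Lia.

Set Implicit Arguments.
Unset Strict Implicit.
Set Bullet Behavior "Strict Subproofs".

Section Permutations.
Variable T : Type.
Implicit Types (c : T) (l m G D X Y : list T).

Lemma perm_weaken_front c G Gm X G' :
  Permutation G (c :: Gm) -> Permutation (X ++ G) G' ->
  Permutation G' (c :: X ++ Gm).
Proof.
by move=> EG <-; rewrite EG; apply: Permutation_sym; apply: Permutation_middle.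
Qed.

Lemma perm_weaken_cons c X G G' :
  Permutation (X ++ G) G' -> Permutation (X ++ c :: G) (c :: G').
Proof. by move=> <-; apply: Permutation_sym; apply: Permutation_middle. Qed.

Lemma perm_app_swap_tail l m Y : Permutation ((l ++ m) ++ Y) ((l ++ Y) ++ m).
Proof.
by rewrite -!catA; apply: Permutation_app_head; apply: Permutation_app_comm.
Qed.

Lemma perm_weaken_back c D Dl Y D' :
  Permutation D (Dl ++ [:: c]) -> Permutation (D ++ Y) D' ->
  Permutation D' ((Dl ++ Y) ++ [:: c]).
Proof. by move=> ED <-; rewrite ED; apply: perm_app_swap_tail. Qed.

End Permutations.

Section Weakening.
Variables (Agt : finType) (L : logic).
Local Notation form := (form Agt).
Local Notation grp := (grp Agt).
Local Notation derivable := (derivable L).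
Local Notation omega_ok := (@omega_ok Agt).
Local Notation Box_pair := (fun x : grp * form => Box x.1 x.2).
Implicit Types (a c : form) (G D X Y Sg Om : list form) (Gp Ga : grp).

Fixpoint fsize a : nat :=
  match a with
  | Var _ | Bot => 1
  | And a1 a2 | Or a1 a2 | Imp a1 a2 => (fsize a1 + fsize a2).+1
  | Neg a1 | Box _ a1 => (fsize a1).+1
  end.

Local Notation Var := (@Var Agt).
Local Notation Bot := (@Bot Agt).

Definition msize X : nat := sumn (map fsize X).

Lemma msize_perm X Y : Permutation X Y -> msize X = msize Y.
Proof.
rewrite /msize; elim=> [|a ? ? _ /= ->|a b ? /=|? ? ? _ -> _ ->] //; lia.
Qed.

Lemma Forall_omega_or_compound X :
  Forall omega_ok X \/ exists c X', Permutation X (c :: X') /\ ~ omega_ok c.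
Proof.
elim: X => [|a X [HX | [c [X' [EX Hc]]]]]; first by left.
- case Ha: a; try by left; constructor.
  all: by right; exists a, X; split => //; rewrite Ha.
- by right; exists c, (a :: X'); split; rewrite // EX; apply: perm_swap.
Qed.

Local Ltac by_size := rewrite /msize ?map_app ?sumn_cat /=; lia.

Definition weakened G D X Y : Prop :=
  forall G' D', Permutation (X ++ G) G' -> Permutation (D ++ Y) D' ->
  derivable G' D'.

Definition admits_weakening G D : Prop := forall X Y, weakened G D X Y.

Lemma weakened_perm G D X X0 Y Y0 :
  Permutation X X0 -> Permutation Y Y0 -> weakened G D X0 Y0 ->
  weakened G D X Y.
Proof. by move=> EX EY W G' D' HG HD; apply: W; [rewrite -EX | rewrite -EY]. Qed.

Lemma weakened_right_compound G D X Y c : ~ omega_ok c ->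
  (forall X0 Y0, msize X0 + msize Y0 < msize X + msize Y + fsize c ->
     weakened G D X0 Y0) ->
  weakened G D X (c :: Y).
Proof.
move=> Hc IH G' D' HG HD.
have {HD} ED : Permutation D' ((D ++ Y) ++ [:: c]).
  by rewrite -HD -catA; apply: Permutation_app_head; apply: Permutation_cons_append.
case: c Hc ED IH => [p||a1 a2|a1 a2|a1 a2|a1|H a1] Hc ED IH; try by case: (Hc I).
- apply: (r_and _ _ ED); [apply: (IH X (Y ++ [:: a1])) | apply: (IH X (Y ++ [:: a2]))];
    rewrite ?catA //; by_size.
- apply: (r_or _ ED); apply: (IH X (Y ++ [:: a1; a2])); rewrite ?catA //; by_size.
- apply: (r_imp _ ED); apply: (IH (a1 :: X) (Y ++ [:: a2])); rewrite ?catA //.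
  + by_size.
  + exact: perm_skip.
- apply: (r_neg _ ED); apply: (IH (a1 :: X) Y) => //.
  + by_size.
  + exact: perm_skip.
Qed.

Lemma weakened_left_compound G D X Y c : ~ omega_ok c ->
  (forall X0 Y0, msize X0 + msize Y0 < msize X + msize Y + fsize c ->
     weakened G D X0 Y0) ->
  weakened G D (c :: X) Y.
Proof.
move=> Hc IH G' D' /Permutation_sym EG HD.
case: c Hc EG IH => [p||a1 a2|a1 a2|a1 a2|a1|H a1] Hc EG IH; try by case: (Hc I).
- by apply: (l_and _ EG); apply: (IH [:: a1, a2 & X] Y) => //; by_size.
- by apply: (l_or _ _ EG); [apply: (IH (a1 :: X) Y) | apply: (IH (a2 :: X) Y)] => //;
    by_size.
- apply: (l_imp _ _ EG); [apply: (IH X (Y ++ [:: a1])) | apply: (IH (a2 :: X) Y)] => //.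
  + by_size.
  + by rewrite catA HD.
  + by_size.
- apply: (l_neg _ EG); apply: (IH X (Y ++ [:: a1])) => //.
  + by_size.
  + by rewrite catA HD.
Qed.

Lemma admits_weakening_of_omega G D :
  (forall X Y, Forall omega_ok X -> Forall omega_ok Y -> weakened G D X Y) ->
  admits_weakening G D.
Proof.
move=> Homega.
suff W n X Y : msize X + msize Y < n -> weakened G D X Y.
  by move=> X Y; apply: (W _ X Y (ltnSn _)).
elim: n X Y => // n IH X Y lt_n.
case: (Forall_omega_or_compound Y) => [HY | [c [Y' [EY Hc]]]].
- case: (Forall_omega_or_compound X) => [HX | [c [X' [EX Hc]]]]; first exact: Homega.
  apply: (weakened_perm EX (Permutation_refl Y)).
  apply: weakened_left_compound => // X0 Y0 lt0.
  by apply: IH; move: lt0 lt_n; rewrite (msize_perm EX); by_size.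
- apply: (weakened_perm (Permutation_refl X) EY).
  apply: weakened_right_compound => // X0 Y0 lt0.
  by apply: IH; move: lt0 lt_n; rewrite (msize_perm EY); by_size.
Qed.

Lemma omega_partition (P : pred grp) (Q : form -> Prop) X :
  (forall p, Q (Var p)) -> Q Bot -> (forall H a, ~~ P H -> Q (Box H a)) ->
  Forall omega_ok X ->
  exists S bx, Permutation X (S ++ map Box_pair bx) /\
    (forall s, In s S -> Q s) /\ (forall x, In x bx -> P x.1).
Proof.
move=> QVar QBot QBox; elim=> [|a X' Ha _ [S [bx [EX [HS Hbx]]]]].
  by exists [::], [::].
have keep_a : Q a -> exists S bx, Permutation (a :: X') (S ++ map Box_pair bx) /\
    (forall s, In s S -> Q s) /\ (forall x, In x bx -> P x.1).
  by move=> Qa; exists (a :: S), bx; split; [exact: perm_skip | split=> // s [<-|/HS]].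
case: a Ha keep_a => [p||||||H a] // _ keep_a; try exact: keep_a.
case PH: (P H); last by apply: keep_a; apply: QBox; rewrite PH.
exists S, ((H, a) :: bx); split; last by split=> // x [<-|/Hbx].
by rewrite EX; apply: Permutation_middle.
Qed.

Lemma admits_weakening_DK G D Sg Om (boxes : list (grp * form)%type) Gp b :
  admits_weakening (map snd boxes) [:: b] ->
  (forall x, In x boxes -> val x.1 \subset val Gp) ->
  (forall s, In s Sg -> sigmaK_ok Gp s) ->
  (forall o, In o Om -> omega_ok o) ->
  Permutation G (Sg ++ map Box_pair boxes) ->
  Permutation D (Box Gp b :: Om) ->
  admits_weakening G D.
Proof.
move=> Wb Hboxes HSg HOm EG ED.
apply: admits_weakening_of_omega => X Y HX HY G' D' HG HD.
have [Sx [bx [EX [HSx Hbx]]]] :=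
  omega_partition (P := fun H => val H \subset val Gp) (Q := sigmaK_ok Gp)
    (fun _ => I) I (fun H a => elimT negP) HX.
apply: (r_DK (Sg := Sx ++ Sg) (Om := Om ++ Y) (boxes := bx ++ boxes)
  (Gp := Gp) (b := b)).
- by apply: (Wb (map snd bx) [::]); rewrite ?map_app.
- by move=> x /in_app_iff[/Hbx|/Hboxes].
- by move=> s /in_app_iff[/HSx|/HSg].
- by move/Forall_forall: HY => HY o /in_app_iff[/HOm|/HY].
- rewrite -HG EX EG map_app -!catA; apply: Permutation_app_head.
  exact: Permutation_app_swap_app.
- by rewrite -HD ED.
Qed.

Lemma admits_weakening_DD G D Sg Om (Gam : list form) ag Ga :
  L = LKD -> val Ga = [set ag] -> Gam <> nil ->
  admits_weakening Gam nil ->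
  (forall s, In s Sg -> sigmaD_ok ag s) ->
  (forall o, In o Om -> omega_ok o) ->
  Permutation G (Sg ++ map (Box Ga) Gam) ->
  Permutation D Om ->
  admits_weakening G D.
Proof.
move=> HL HGa HGam WGam HSg HOm EG ED.
apply: admits_weakening_of_omega => X Y HX HY G' D' HG HD.
have [Sx [bx [EX [HSx Hbx]]]] :=
  omega_partition (P := fun H => val H == [set ag]) (Q := sigmaD_ok ag)
    (fun _ => I) I (fun H a => elimN eqP) HX.
have Ebx : map Box_pair bx = map (Box Ga) (map snd bx).
  rewrite map_map; apply: map_ext_in => -[H a] /Hbx /eqP /= EH.
  by congr Box; apply: val_inj; rewrite /= EH HGa.
apply: (r_DD (Sg := Sx ++ Sg) (Om := Om ++ Y) (Gam := map snd bx ++ Gam) HL HGa).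
- by case: (map snd bx).
- exact: (WGam (map snd bx) [::]).
- by move=> s /in_app_iff[/HSx|/HSg].
- by move/Forall_forall: HY => HY o /in_app_iff[/HOm|/HY].
- rewrite -HG EX Ebx EG map_app -!catA; apply: Permutation_app_head.
  exact: Permutation_app_swap_app.
- by rewrite -HD ED.
Qed.

Lemma derivable_admits_weakening G D : derivable G D -> admits_weakening G D.
Proof.
elim=> {G D}
  [G D Gm Dl p EG ED | G D Gm EG
  | G D Dl a1 a2 _ W1 _ W2 ED | G D Gm a1 a2 _ W EG
  | G D Dl a1 a2 _ W ED | G D Gm a1 a2 _ W1 _ W2 EG
  | G D Dl a1 a2 _ W ED | G D Gm a1 a2 _ W1 _ W2 EG
  | G D Dl a _ W ED | G D Gm a _ W EG
  | G D Sg Om boxes Gp b _ W Hb HSg HOm EG ED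
  | G D Sg Om Gam ag Ga HL HGa Hne _ W HSg HOm EG ED
  | G D Gm Gp a HL _ W EG].
- move=> X Y G' D' HG HD; apply: (ax_var L (Dl := Dl ++ Y) (perm_weaken_front EG HG)).
  by rewrite -HD ED.
- by move=> X Y G' D' HG _; exact: (ax_bot L D' (perm_weaken_front EG HG)).
- move=> X Y G' D' HG HD; apply: (r_and _ _ (perm_weaken_back ED HD)).
  + exact: (W1 X Y _ _ HG (perm_app_swap_tail _ _ _)).
  + exact: (W2 X Y _ _ HG (perm_app_swap_tail _ _ _)).
- move=> X Y G' D' HG HD; apply: (l_and _ (perm_weaken_front EG HG)).
  exact: (W X Y _ _ (Permutation_app_swap_app X [:: a1; a2] Gm) HD).
- move=> X Y G' D' HG HD; apply: (r_or _ (perm_weaken_back ED HD)).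
  exact: (W X Y _ _ HG (perm_app_swap_tail _ _ _)).
- move=> X Y G' D' HG HD; apply: (l_or _ _ (perm_weaken_front EG HG)).
  + exact: (W1 X Y _ _ (Permutation_app_swap_app X [:: a1] Gm) HD).
  + exact: (W2 X Y _ _ (Permutation_app_swap_app X [:: a2] Gm) HD).
- move=> X Y G' D' HG HD; apply: (r_imp _ (perm_weaken_back ED HD)).
  exact: (W X Y _ _ (perm_weaken_cons a1 HG) (perm_app_swap_tail _ _ _)).
- move=> X Y G' D' HG HD; apply: (l_imp _ _ (perm_weaken_front EG HG)).
  + by apply: (W1 X Y); rewrite // -HD perm_app_swap_tail.
  + exact: (W2 X Y _ _ (Permutation_app_swap_app X [:: a2] Gm) HD).
- move=> X Y G' D' HG HD; apply: (r_neg _ (perm_weaken_back ED HD)).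
  exact: (W X Y _ _ (perm_weaken_cons a HG) (Permutation_refl _)).
- move=> X Y G' D' HG HD; apply: (l_neg _ (perm_weaken_front EG HG)).
  by apply: (W X Y); rewrite // -HD perm_app_swap_tail.
- exact: admits_weakening_DK W Hb HSg HOm EG ED.
- exact: admits_weakening_DD HL HGa Hne W HSg HOm EG ED.
- move=> X Y G' D' HG HD; apply: (r_DT HL _ (perm_weaken_front EG HG)).
  exact: (W X Y _ _ (Permutation_app_swap_app X [:: Box Gp a; a] Gm) HD).
Qed.

End Weakening.

Theorem proposition3p8 (Agt : finType) (L : logic)
    (Gam Del : list (form Agt)) (lam : form Agt) :
  0 < #|Agt| ->
  derivable L Gam Del ->
  derivable L Gam (Del ++ [:: lam]) /\ derivable L (lam :: Gam) Del.
Proof.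
move=> _ /derivable_admits_weakening W; split.
- exact: (W [::] [:: lam]).
- by apply: (W [:: lam] [::]); rewrite // cats0.
Qed.
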